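(* Under the setting and assumptions in the context, if $\Pr(Y(0)=0,Y(1)=1)>0$, then $$APCE_H=\frac{E[Y\mid Z=1]-E[Y\mid Z=0]}{\Pr(Y(1)=1)-\Pr(Y(0)=1)}.$$
   Context: Units are drawn from a population (a probability space). Each unit has a binary assignment $Z\in\{0,1\}$ with $0<\Pr(Z=1)<1$, binary potential recommendations $R(0),R(1)\in\{0,1\}$, and binary potential outcomes $Y(0),Y(1)\in\{0,1\}$ indexed by the recommendation only (exclusion restriction). Observed quantities are $R=R(Z)$ and $Y=Y(R(Z))$. Assumptions: (Randomization) $Z$ is independent of $(R(0),R(1),Y(0),Y(1))$; (Monotonicity) $Y(1)\ge Y(0)$ almost surely. Principal strata: Always Low $AL=\{Y(0)=Y(1)=0\}$, Always High $AH=\{Y(0)=Y(1)=1\}$, Helpable $H=\{Y(0)=0,Y(1)=1\}$. For a stratum $J$ with positive probability, $APCE_J=E[R(1)-R(0)\mid J]$. *)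

From HB Require Import structures.
From mathcomp Require Import all_boot all_order all_algebra.
From mathcomp Require Import all_classical all_reals all_analysis.
Set Implicit Arguments. Unset Strict Implicit. Unset Printing Implicit Defensive.
Import Order.TTheory GRing.Theory Num.Theory.
Local Open Scope classical_set_scope.
Local Open Scope ring_scope.

Section Defs.
Context {d : measure_display} {T : measurableType d} {R : realType}.

Definition cexpect (P : probability T R) (X : T -> R) (A : set T) : R :=
  fine (\int[P]_(w in A) (X w)%:E) / fine (P A).

(* Randomization: Z is independent of the vector (R(0),R(1),Y(0),Y(1)).
   Since all variables are boolean, this is the product rule for every
   value b of Z and every set S of values of the vector. *)
Definition indep_Z_vec (P : probability T R) (Z R0 R1 Y0 Y1 : T -> bool) : Prop :=
  forall (b : bool) (S : set (bool * bool * bool * bool)),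
    P ([set w | Z w = b] `&` [set w | S (R0 w, R1 w, Y0 w, Y1 w)])
    = (P [set w | Z w = b] * P [set w | S (R0 w, R1 w, Y0 w, Y1 w)])%E.

Definition obsR (Z R0 R1 : T -> bool) : T -> bool :=
  fun w => if Z w then R1 w else R0 w.
Definition obsY (Z R0 R1 Y0 Y1 : T -> bool) : T -> bool :=
  fun w => if obsR Z R0 R1 w then Y1 w else Y0 w.

Definition helpable (Y0 Y1 : T -> bool) : set T := [set w | ~~ Y0 w && Y1 w].

Definition APCE (P : probability T R) (R0 R1 : T -> bool) (J : set T) : R :=
  cexpect P (fun w => (R1 w)%:R - (R0 w)%:R) J.

End Defs.

From HB Require Import structures.
From mathcomp Require Import all_boot all_order all_algebra.
From mathcomp Require Import all_classical all_reals all_analysis.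
From mathcomp Require Import measurable_realfun.
Import Order.TTheory GRing.Theory Num.Theory.
Set Implicit Arguments. Unset Strict Implicit. Unset Printing Implicit Defensive.
Local Open Scope classical_set_scope.
Local Open Scope ring_scope.

(* By randomization, E[Y | Z = z] = P(Y(R(z)) = 1), where Y(R(z)) is
   [outcome_at R(z) Y0 Y1].  Pointwise Y(R(1)) - Y(R(0)) = (R(1) - R(0))(Y(1) - Y(0)),
   and under monotonicity Y(1) - Y(0) is almost surely the indicator of the
   helpable stratum H.  Taking expectations, the numerator of the ratio is
   E[(R(1) - R(0)) 1_H] and its denominator is P(H), so the ratio is APCE_H. *)

Definition outcome_at {T : Type} (Rz Y0 Y1 : T -> bool) : T -> bool :=
  fun w => if Rz w then Y1 w else Y0 w.

Lemma setI_andb {T : Type} (a b : T -> bool) :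
  [set w | a w] `&` [set w | b w] = [set w | a w && b w].
Proof. by apply/seteqP; split => w /=; [case=> -> -> | case/andP]. Qed.

Section boolean_events.
Context {d : measure_display} {T : measurableType d} {R : realType}.
Variable P : probability T R.
Implicit Types (a b c e : T -> bool) (A : set T).

Lemma measurable_boolP b : measurable [set w | b w] <-> measurable_fun setT b.
Proof.
split => [mb|mb]; first by apply: (measurable_fun_bool true); rewrite setTI.
by rewrite -(setTI [set w | b w]); exact: mb.
Qed.

Lemma nat_bool_indic b : (fun w => (b w)%:R) = \1_[set w | b w] :> (T -> R).
Proof.
apply/funext => w; rewrite indicE.
by case: (boolP (b w)) => bw; [rewrite mem_set | rewrite memNset //; apply/negP].
Qed.

Lemma integrable_nat_bool A b : measurable A -> measurable [set w | b w] ->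
  P.-integrable A (EFin \o (fun w => (b w)%:R)).
Proof.
move=> mA mb; rewrite nat_bool_indic.
exact: integrableS (subsetT _) (integrable_indic P mb).
Qed.

Lemma Rintegral_nat_bool A b : measurable A -> measurable [set w | b w] ->
  \int[P]_(w in A) (b w)%:R = fine (P ([set w | b w] `&` A)).
Proof. by move=> mA mb; rewrite nat_bool_indic /Rintegral integral_indic. Qed.

Lemma cexpect_nat_bool A b : measurable A -> measurable [set w | b w] ->
  cexpect P (fun w => (b w)%:R) A = fine (P ([set w | b w] `&` A)) / fine (P A).
Proof. by move=> mA mb; rewrite /cexpect -Rintegral_nat_bool. Qed.

Lemma cexpect_subr_nat_bool A b1 b0 :
  measurable A -> measurable [set w | b1 w] -> measurable [set w | b0 w] ->
  cexpect P (fun w => (b1 w)%:R - (b0 w)%:R) A =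
  (fine (P ([set w | b1 w] `&` A)) - fine (P ([set w | b0 w] `&` A))) / fine (P A).
Proof.
move=> mA mb1 mb0; rewrite /cexpect -/(Rintegral P A _) RintegralB //.
- by rewrite !Rintegral_nat_bool.
- exact: integrable_nat_bool.
- exact: integrable_nat_bool.
Qed.

Lemma cexpect_indep A b : measurable A -> measurable [set w | b w] ->
  P (A `&` [set w | b w]) = (P A * P [set w | b w])%E -> (0 < P A)%E ->
  cexpect P (fun w => (b w)%:R) A = fine (P [set w | b w]).
Proof.
move=> mA mb indep PA_gt0.
rewrite cexpect_nat_bool // setIC indep fineM ?fin_num_measure //.
by rewrite mulrAC divff ?mul1r // fine_eq0 ?fin_num_measure // gt_eqF.
Qed.

Lemma prob_subr_ae a b c e :
  measurable [set w | a w] -> measurable [set w | b w] ->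
  measurable [set w | c w] -> measurable [set w | e w] ->
  {ae P, forall w, (a w)%:R - (b w)%:R = (c w)%:R - (e w)%:R :> R} ->
  fine (P [set w | a w]) - fine (P [set w | b w]) =
  fine (P [set w | c w]) - fine (P [set w | e w]).
Proof.
move=> ma mb mc me ae_eq_ab_ce.
have mnat (f : T -> bool) :
    measurable [set w | f w] -> measurable_fun setT (fun w => (f w)%:R : R).
  by move=> mf; rewrite nat_bool_indic; exact: measurable_indic.
have intE (f : T -> bool) : measurable [set w | f w] ->
    fine (P [set w | f w]) = \int[P]_(w in setT) (f w)%:R.
  by move=> mf; rewrite Rintegral_nat_bool // setIT.
rewrite !intE // -!RintegralB ?integrable_nat_bool //; congr fine.
apply: ae_eq_integral => //.
- by apply/measurable_EFinP; apply: measurable_funB; exact: mnat.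
- by apply/measurable_EFinP; apply: measurable_funB; exact: mnat.
- by apply: filterS ae_eq_ab_ce => w /= ->.
Qed.

End boolean_events.

Lemma outcome_at_subr_helpable {R : pzRingType} (r0 r1 y0 y1 : bool) :
  (y0 <= y1)%N ->
  (if r1 then y1 else y0)%:R - (if r0 then y1 else y0)%:R =
  (r1 && (~~ y0 && y1))%:R - (r0 && (~~ y0 && y1))%:R :> R.
Proof. by case: r0; case: r1; case: y0; case: y1 => //= _; rewrite !subrr. Qed.

Lemma potential_subr_helpable {R : pzRingType} (y0 y1 : bool) :
  (y0 <= y1)%N -> y1%:R - y0%:R = (~~ y0 && y1)%:R - false%:R :> R.
Proof. by case: y0; case: y1 => //= _; rewrite !subrr. Qed.

Section monotone_outcomes.
Context {d : measure_display} {T : measurableType d} {R : realType}.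
Variables (P : probability T R) (Y0 Y1 : T -> bool).
Hypotheses (mY0 : measurable [set w | Y0 w]) (mY1 : measurable [set w | Y1 w])
  (hmono : {ae P, forall w, (Y0 w <= Y1 w)%N}).

Lemma measurable_outcome_at (Rz : T -> bool) : measurable [set w | Rz w] ->
  measurable [set w | outcome_at Rz Y0 Y1 w].
Proof.
move=> mRz; apply/measurable_boolP.
by apply: measurable_fun_ifT; exact/measurable_boolP.
Qed.

Lemma measurable_helpable : measurable (helpable Y0 Y1).
Proof.
apply/measurable_boolP; apply: measurable_and; last exact/measurable_boolP.
exact/measurable_neg/measurable_boolP.
Qed.

Lemma prob_outcome_at_subr (R0 R1 : T -> bool) :
  measurable [set w | R0 w] -> measurable [set w | R1 w] ->
  fine (P [set w | outcome_at R1 Y0 Y1 w]) - fine (P [set w | outcome_at R0 Y0 Y1 w]) =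
  fine (P ([set w | R1 w] `&` helpable Y0 Y1)) -
  fine (P ([set w | R0 w] `&` helpable Y0 Y1)).
Proof.
move=> mR0 mR1; rewrite !(setI_andb _ (fun w => ~~ Y0 w && Y1 w)).
have mRH (Rz : T -> bool) : measurable [set w | Rz w] ->
    measurable [set w | Rz w && (~~ Y0 w && Y1 w)].
  by move=> mRz; rewrite -setI_andb; exact: measurableI measurable_helpable.
apply: prob_subr_ae; do ?[exact: measurable_outcome_at | exact: mRH].
by apply: filterS hmono => w; exact: outcome_at_subr_helpable.
Qed.

Lemma prob_potential_subr :
  fine (P [set w | Y1 w]) - fine (P [set w | Y0 w]) = fine (P (helpable Y0 Y1)).
Proof.
have falseE : [set _ : T | false] = set0 by apply/seteqP; split.
rewrite (prob_subr_ae (c := fun w => ~~ Y0 w && Y1 w) (e := fun=> false))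
  ?falseE ?measure0 ?subr0 //; first exact: measurable_helpable.
by apply: filterS hmono => w; exact: potential_subr_helpable.
Qed.

End monotone_outcomes.

Section randomized_assignment.
Context {d : measure_display} {T : measurableType d} {R : realType}.
Variables (P : probability T R) (Z R0 R1 Y0 Y1 : T -> bool).
Hypotheses (mZ : measurable [set w | Z w]) (mR0 : measurable [set w | R0 w])
  (mR1 : measurable [set w | R1 w]) (mY0 : measurable [set w | Y0 w])
  (mY1 : measurable [set w | Y1 w]).

Lemma cexpect_obsY_given_Z (b : bool) :
  indep_Z_vec P Z R0 R1 Y0 Y1 -> (0 < P [set w | Z w = b])%E ->
  cexpect P (fun w => (obsY Z R0 R1 Y0 Y1 w)%:R) [set w | Z w = b] =
  fine (P [set w | outcome_at (if b then R1 else R0) Y0 Y1 w]).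
Proof.
move=> hrand PZb_gt0.
have mZb : measurable [set w | Z w = b].
  rewrite -(setTI [set _ | _]); exact: (measurable_boolP Z).1 mZ measurableT [set b] I.
rewrite -(@cexpect_indep _ _ _ P _ (outcome_at (if b then R1 else R0) Y0 Y1)
  mZb _ _ PZb_gt0); first last.
- by case: b {PZb_gt0 mZb};
    [exact: (hrand true (fun v => if v.1.1.2 then v.2 else v.1.2))
    |exact: (hrand false (fun v => if v.1.1.1 then v.2 else v.1.2))].
- by apply: measurable_outcome_at; case: b {PZb_gt0 mZb}.
rewrite /cexpect; congr (fine _ / _); apply: eq_integral => w.
by rewrite inE /obsY /obsR /outcome_at /= => ->; case: b {PZb_gt0 mZb}.
Qed.

End randomized_assignment.

Theorem mainTheorem2 (d : measure_display) (T : measurableType d) (R : realType)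
  (P : probability T R) (Z R0 R1 Y0 Y1 : T -> bool)
  (mZ : measurable [set w | Z w]) (mR0 : measurable [set w | R0 w])
  (mR1 : measurable [set w | R1 w]) (mY0 : measurable [set w | Y0 w])
  (mY1 : measurable [set w | Y1 w])
  (hZ : (0 < P [set w | Z w] < 1)%E)
  (hrand : indep_Z_vec P Z R0 R1 Y0 Y1)
  (hmono : {ae P, forall w, (Y0 w <= Y1 w)%N})
  (hH : (0 < P (helpable Y0 Y1))%E) :
  APCE P R0 R1 (helpable Y0 Y1) =
  (cexpect P (fun w => (obsY Z R0 R1 Y0 Y1 w)%:R) [set w | Z w]
   - cexpect P (fun w => (obsY Z R0 R1 Y0 Y1 w)%:R) [set w | ~~ Z w])
  / (fine (P [set w | Y1 w]) - fine (P [set w | Y0 w])).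
Proof.
move: hZ => /andP[PZ_gt0 PZ_lt1].
have ZfalseE : [set w | Z w = false] = ~` [set w | Z w].
  by apply/seteqP; split => w /=; case: (Z w).
have PnotZ_gt0 : (0 < P [set w | Z w = false])%E.
  by rewrite ZfalseE probability_setC // sube_gt0.
have -> : [set w | ~~ Z w] = [set w | Z w = false].
  by apply/seteqP; split => w /=; case: (Z w).
rewrite (cexpect_obsY_given_Z mZ mR0 mR1 mY0 mY1 hrand PZ_gt0).
rewrite (cexpect_obsY_given_Z mZ mR0 mR1 mY0 mY1 hrand PnotZ_gt0).
rewrite prob_outcome_at_subr // prob_potential_subr //.
by rewrite /APCE cexpect_subr_nat_bool //; exact: measurable_helpable.
Qed.
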